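(* Let $d\geq 1$ and let $F\in C^1(\mathbb{R}^d)^d$ satisfy $F(x+k)=F(x)+k$ for all $k\in\mathbb{Z}^d$ and $x\in\mathbb{R}^d$. Suppose there exists a $\mathbb{Z}^d$-periodic vector field $b\in C^1(\mathbb{R}^d)^d$ such that $F=X(1,\cdot)$, where $X$ is the flow of $b$. Then $$(\nabla F(x))\,b(x)=b(F(x))\quad\text{for all }x\in\mathbb{R}^d .$$ Moreover, for every $a\in\mathbb{R}^d$ such that $F(a)-a\in\mathbb{Z}^d$ and $\det(\nabla F(a)-I_d)\neq 0$, one has $b(a)=0_{\mathbb{R}^d}$.
   Context: For a $\mathbb{Z}^d$-periodic $b\in C^1(\mathbb{R}^d)^d$, the flow $X:\mathbb{R}\times\mathbb{R}^d\to\mathbb{R}^d$ is defined by $\partial_t X(t,x)=b(X(t,x))$, $X(0,x)=x$. $\nabla F$ denotes the Jacobian matrix of $F$ and $I_d$ the identity matrix. *)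

From HB Require Import structures.
From mathcomp Require Import all_boot all_order all_algebra.
From mathcomp Require Import all_classical all_reals all_analysis.
Set Implicit Arguments. Unset Strict Implicit. Unset Printing Implicit Defensive.
Import Order.TTheory GRing.Theory Num.Theory.
Import numFieldNormedType.Exports.
Local Open Scope ring_scope.

(* We use the library Jacobian derive.jacobian f p := lin1_mx ('d f p),
   which is the row-vector convention: v *m jacobian f p = 'd f p v,
   i.e. it is the transpose of the textbook matrix (dF_i/dx_j). *)

Definition C1 (R : realType) (d : nat) (F : 'rV[R]_d -> 'rV[R]_d) : Prop :=
  (forall x, differentiable F x) /\ continuous (jacobian F).

Definition zvec (R : realType) (d : nat) (k : 'rV[int]_d) : 'rV[R]_d :=
  map_mx (fun z : int => z%:~R) k.

Definition Zd_periodic (R : realType) (d : nat) (b : 'rV[R]_d -> 'rV[R]_d) :=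
  forall (k : 'rV[int]_d) (x : 'rV[R]_d), b (x + zvec R k) = b x.

Definition is_flow (R : realType) (d : nat) (b : 'rV[R]_d -> 'rV[R]_d)
  (X : R -> 'rV[R]_d -> 'rV[R]_d) : Prop :=
  (forall x, X 0 x = x) /\
  (forall (t : R) (x : 'rV[R]_d), is_derive t 1 (fun s => X s x) (b (X t x))).

(* Since the time-1 map of the flow commutes with the flow,
   F (X s x) = X (s + 1) x; differentiating at s = 0 gives
   b x * DF(x) = b (F x).  The commutation X 1 (X s x) = X (1 + s) x comes
   from uniqueness of solutions of y' = b y: b is C^1, hence Lipschitz on
   balls, and if |y' - z'| <= L |y - z| then, on an interval of length δ with
   L δ < 1 starting where y = z, the maximum m of |y - z| satisfies
   m <= L δ m, so m = 0.
   At a point with F a = a + k, k in Z^d, periodicity of b turns the identity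
   into b a * (DF(a) - I) = 0, and invertibility of DF(a) - I gives b a = 0. *)

From HB Require Import structures.
From mathcomp Require Import all_boot all_order all_algebra.
From mathcomp Require Import all_classical all_reals all_analysis.
From mathcomp Require Import lra.
Set Implicit Arguments. Unset Strict Implicit. Unset Printing Implicit Defensive.
Import Order.TTheory GRing.Theory Num.Theory.
Import numFieldNormedType.Exports.
Local Open Scope ring_scope.
Local Open Scope classical_set_scope.

Section MatrixNorm.
Variable R : realType.

Lemma normr_mx_entry_le m n (A : 'M[R]_(m, n)) i j : `|A i j| <= `|A|.
Proof.
rewrite [leRHS]/Num.norm /= mx_normrE.
by apply/bigmax_geP; right => /=; exists (i, j).
Qed.

Lemma normr_mx_le m n (A : 'M[R]_(m, n)) c :
  0 <= c -> (forall i j, `|A i j| <= c) -> `|A| <= c.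
Proof.
move=> c0 Ac; rewrite [leLHS]/Num.norm /= mx_normrE.
by apply: bigmax_le => // -[i j] _; exact: Ac.
Qed.

Lemma normr_mulmx_le m n p (A : 'M[R]_(m, n)) (B : 'M[R]_(n, p)) :
  `|A *m B| <= n%:R * (`|A| * `|B|).
Proof.
apply: normr_mx_le => [|i j]; first by rewrite !mulr_ge0.
rewrite mxE; apply: le_trans (ler_norm_sum _ _ _) _.
have -> : n%:R * (`|A| * `|B|) = \sum_(k < n) `|A| * `|B|.
  by rewrite sumr_const card_ord mulr_natl.
apply: ler_sum => k _.
by rewrite normrM ler_pM ?normr_mx_entry_le.
Qed.

End MatrixNorm.

Lemma fixed_row_eq0 (K : fieldType) n (v : 'rV[K]_n) (A : 'M[K]_n) :
  v *m A = v -> \det (A - 1%:M) != 0 -> v = 0.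
Proof.
move=> vA det_ne0; apply/eqP.
have /mulmx_free_eq0 <- : row_free (A - 1%:M) by rewrite row_free_unit unitmxE unitfE.
by rewrite mulmxBr mulmx1 vA subrr.
Qed.

Section CurveDerivatives.
Variable R : realType.

Lemma is_derive_comp_diff (V W : normedModType R) (f : R -> V) (g : V -> W)
    (t : R) (df : V) :
  is_derive t 1 f df -> differentiable g (f t) ->
  is_derive t 1 (g \o f) ('d g (f t) df).
Proof.
move=> [f_derivable <-] g_diff.
have f_diff : differentiable f t by apply/derivable1_diffP.
have gf_diff : differentiable (g \o f) t by apply: differentiable_comp.
apply: DeriveDef; first by apply/derivable1_diffP.
by rewrite (deriveE _ gf_diff) (deriveE _ f_diff) diff_comp.
Qed.

Lemma is_derive_comp_jacobian m n (f : R -> 'rV[R]_m) (g : 'rV[R]_m -> 'rV[R]_n)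
    (t : R) (df : 'rV[R]_m) :
  is_derive t 1 f df -> differentiable g (f t) ->
  is_derive t 1 (g \o f) (df *m jacobian g (f t)).
Proof.
by move=> f_derive /(is_derive_comp_diff f_derive); rewrite /jacobian mul_rV_lin1.
Qed.

Lemma diff_mx_entry m n (M v : 'M[R]_(m, n)) i j :
  'd (fun N : 'M[R]_(m, n) => N i j) M v = v i j.
Proof.
have @entry : {linear 'M[R]_(m, n) -> R}.
  by exists (fun N : 'M[R]_(_, _) => N i j); do 2![eexists]; do ?[constructor];
     rewrite ?mxE// => ? *; rewrite ?mxE//; move=> ?; rewrite !mxE.
by rewrite (_ : (fun _ => _) = entry) // diff_lin //; exact: coord_continuous.
Qed.

Lemma is_derive_mx_entry m n (f : R -> 'M[R]_(m, n)) (t : R) df i j :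
  is_derive t 1 f df -> is_derive t 1 (fun s => f s i j) (df i j).
Proof.
move=> f_derive; have := is_derive_comp_diff f_derive (differentiable_coord (f t) i j).
by rewrite diff_mx_entry.
Qed.

Lemma is_derive_shift_comp (V : normedModType R) (g : R -> V) (c t : R) (dg : V) :
  is_derive (t + c) 1 g dg -> is_derive t 1 (fun u => g (u + c)) dg.
Proof.
move=> [/derivable1_diffP g_diff <-].
have := is_derive_comp_diff (@is_derive_shift R t 1 c) g_diff.
by rewrite -deriveE.
Qed.

Lemma is_derive_segment n (p v : 'rV[R]_n) (t : R) :
  is_derive t 1 (fun s : R => p + s *: v) v.
Proof.
have scale_derive : is_derive t 1 ( *:%R^~ v : R -> 'rV[R]_n) v.
  apply: DeriveDef; first exact: diff_derivable.
  by rewrite deriveE // diff_val scale1r.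
by have := is_deriveD (is_derive_cst p t 1) scale_derive; rewrite add0r.
Qed.

Lemma normr_sub_le_derive m n (f df : R -> 'M[R]_(m, n)) (a c K : R) :
  a <= c -> {in `[a, c]%R, forall s : R, is_derive s 1 f (df s)} ->
  {in `[a, c]%R, forall s, `|df s| <= K} ->
  `|f c - f a| <= K * (c - a).
Proof.
move=> ac f_derive df_le.
have aI : a \in `[a, c]%R by rewrite in_itv /= lexx ac.
have K0 : 0 <= K := le_trans (normr_ge0 _) (df_le a aI).
apply: normr_mx_le => [|i j]; first by rewrite mulr_ge0 ?subr_ge0.
pose phi s := f s i j.
have phi_derive s : s \in `[a, c]%R -> is_derive s 1 phi (df s i j).
  by move=> /f_derive; exact: is_derive_mx_entry.
have phi_cont : {within `[a, c], continuous phi}.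
  by apply: derivable_within_continuous => s /phi_derive [].
have [xi xiI MVT_eq] := @MVT_segment _ phi (fun s => df s i j) a c ac
  (fun s sI => phi_derive s (subset_itv_oo_cc sI)) phi_cont.
rewrite !mxE -/(phi c) -/(phi a) MVT_eq normrM [`|c - a|]ger0_norm ?subr_ge0 //.
rewrite ler_wpM2r ?subr_ge0 //.
exact: le_trans (normr_mx_entry_le _ _ _) (df_le _ xiI).
Qed.

End CurveDerivatives.

Section C1Lipschitz.
Variables (R : realType) (n : nat).

Lemma compact_norm_le (M : R) : compact [set p : 'rV[R]_n | `|p| <= M].
Proof.
apply: bounded_closed_compact.
  exists M; split; first exact: num_real.
  by move=> r Mr p /= pM; exact: le_trans pM (ltW Mr).
rewrite -[X in closed X]/(Num.norm @^-1` [set x : R | x <= M]).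
apply: (preimage_closed _ (@closed_le _ M)) => p _.
exact: norm_continuous.
Qed.

Lemma C1_lipschitz_on_balls (b : 'rV[R]_n -> 'rV[R]_n) : C1 b ->
  forall M : R, exists2 L : R, 0 <= L & L.-lipschitz_[set p | `|p| <= M] b.
Proof.
move=> [b_diff Jb_cont] M.
have [M0|M0] := ltP M 0.
  exists 0 => // -[p q] [/= pM _].
  by have := le_lt_trans (normr_ge0 p) (le_lt_trans pM M0); rewrite ltxx.
set A := [set p : 'rV[R]_n | `|p| <= M].
have A0 : A !=set0 by exists 0; rewrite /A /= normr0.
have Jb_norm_cont : {within A, continuous (fun p => `|jacobian b p|)}.
  apply: continuous_subspaceT => p.
  by apply: continuous_comp; [exact: Jb_cont | exact: norm_continuous].
have [c _ Jb_max] := EVT_max_rV A0 (@compact_norm_le M) Jb_norm_cont.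
set J := `|jacobian b c|.
exists (n%:R * J); first by rewrite mulr_ge0 ?ler0n ?normr_ge0.
move=> [p q] [/= pA qA].
pose seg s := q + s *: (p - q).
have segA s : s \in `[0, 1]%R -> A (seg s).
  move=> sI; have [s0 s1] : 0 <= s /\ s <= 1 by rewrite !(itvP sI).
  have -> : seg s = (1 - s) *: q + s *: p.
    by rewrite /seg scalerBr scalerBl scale1r addrAC addrA.
  apply: le_trans (ler_normD _ _) _; rewrite !normrZ !ger0_norm ?subr_ge0 //.
  have -> : M = (1 - s) * M + s * M by rewrite mulrBl mul1r subrK.
  by apply: lerD; apply: ler_wpM2l; rewrite ?subr_ge0.
have := @normr_sub_le_derive _ _ _ (b \o seg) (fun s => (p - q) *m jacobian b (seg s))
  0 1 (n%:R * J * `|p - q|) ler01.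
rewrite /= /seg scale1r scale0r addr0 [q + _]addrC subrK subr0 mulr1; apply.
  by move=> s _; apply: is_derive_comp_jacobian; [exact: is_derive_segment | exact: b_diff].
move=> s sI; apply: le_trans (normr_mulmx_le _ _) _.
rewrite -mulrA; apply: ler_wpM2l; first exact: ler0n.
rewrite [leLHS]mulrC; apply: ler_wpM2r; first exact: normr_ge0.
exact: (Jb_max _ (mem_set (segA s sI))).
Qed.
End C1Lipschitz.

Section ODEUniqueness.
Variable R : realType.

Lemma eq0_of_normr_derive_le m n (D dD : R -> 'M[R]_(m, n)) (a t L : R) :
  a <= t -> 0 <= L -> L * (t - a) < 1 ->
  {in `[a, t]%R, forall s : R, is_derive s 1 D (dD s)} ->
  {in `[a, t]%R, forall s, `|dD s| <= L * `|D s|} ->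
  D a = 0 -> D t = 0.
Proof.
move=> at_ L0 Lt D_derive dD_le Da.
have normD_cont : {within `[a, t], continuous (fun s => `|D s|)}.
  apply: within_continuous_comp; first by move=> ? _; exact: norm_continuous.
  by apply: derivable_within_continuous => s /D_derive [].
have [c cI normD_max] := EVT_max at_ normD_cont.
set Dmax := `|D c|.
have [ac ct] : a <= c /\ c <= t by rewrite !(itvP cI).
have sub_at s : s \in `[a, c]%R -> s \in `[a, t]%R.
  move=> sI; have sc : s <= c by rewrite (itvP sI).
  by rewrite in_itv /= (itvP sI) (le_trans sc ct).
have Dmax_le : Dmax <= L * Dmax * (t - a).
  have dD_le_max s : s \in `[a, c]%R -> `|dD s| <= L * Dmax.
    move=> /sub_at sI; apply: le_trans (dD_le s sI) _.
    by rewrite ler_wpM2l // normD_max.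
  have := normr_sub_le_derive ac (fun s sI => D_derive s (sub_at s sI)) dD_le_max.
  rewrite Da subr0 => /le_trans; apply.
  by apply: ler_wpM2l; [rewrite mulr_ge0 ?normr_ge0 | rewrite lerD2r].
have Dmax0 : 0 <= Dmax := normr_ge0 _.
have : `|D t| <= 0.
  apply: le_trans (normD_max t _) _; first by rewrite in_itv /= at_ lexx.
  by rewrite -/Dmax; nra.
by rewrite normr_le0 => /eqP.
Qed.

Variables (n : nat) (b : 'rV[R]_n -> 'rV[R]_n).
Hypothesis b_lipschitz :
  forall M : R, exists2 L : R, 0 <= L & L.-lipschitz_[set p | `|p| <= M] b.

Lemma ode_solution_unique (y z : R -> 'rV[R]_n) (T : R) :
  (forall t : R, is_derive t 1 y (b (y t))) ->
  (forall t : R, is_derive t 1 z (b (z t))) ->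
  y 0 = z 0 -> 0 <= T -> y T = z T.
Proof.
move=> y_derive z_derive yz0 T0.
have y_cont : continuous y.
  by move=> t; case: (y_derive t) => /derivable1_diffP/differentiable_continuous.
have z_cont : continuous z.
  by move=> t; case: (z_derive t) => /derivable1_diffP/differentiable_continuous.
have yz_cont : {within `[0, T], continuous (fun t => `|y t| + `|z t|)}.
  apply: continuous_subspaceT => t; apply: cvgD.
    by apply: continuous_comp; [exact: y_cont | exact: norm_continuous].
  by apply: continuous_comp; [exact: z_cont | exact: norm_continuous].
have [c _ yz_max] := EVT_max T0 yz_cont.
set M := `|y c| + `|z c|.
have [L L0 b_lip] := b_lipschitz M.
pose D t := y t - z t.
have D_derive (t : R) : is_derive t 1 D (b (y t) - b (z t)) by apply: is_deriveB.
have dD_le t : t \in `[0, T]%R -> `|b (y t) - b (z t)| <= L * `|D t|.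
  move=> /yz_max tM; apply: (b_lip (y t, z t)); split => /=; apply: le_trans tM.
    by rewrite lerDl normr_ge0.
  by rewrite lerDr normr_ge0.
pose del := (2 * (L + 1))^-1.
have del0 : 0 < del by rewrite invr_gt0; lra.
have Ldel : L * del < 1 by rewrite ltr_pdivrMr ?mul1r; lra.
have D0 (k : nat) t : t \in `[0, T]%R -> t <= k%:R * del -> D t = 0.
  elim: k t => [|k IH] t tI tk.
    rewrite mul0r in tk; have -> : t = 0 by apply: le_anti; rewrite tk (itvP tI).
    by rewrite /D yz0 subrr.
  set a := k%:R * del.
  have [ta|at_] := leP t a; first exact: IH.
  have a0 : 0 <= a by rewrite mulr_ge0 // ltW.
  have sub_0T s : s \in `[a, t]%R -> s \in `[0, T]%R.
    move=> sI; have [as_ st] : a <= s /\ s <= t by rewrite !(itvP sI).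
    by rewrite in_itv /= (le_trans a0 as_) (le_trans st) ?(itvP tI).
  apply: (@eq0_of_normr_derive_le _ _ D (fun s => b (y s) - b (z s)) a t L).
  - exact: ltW.
  - exact: L0.
  - apply: le_lt_trans Ldel; rewrite ler_wpM2l // lerBlDl.
    by rewrite -natr1 mulrDl mul1r in tk.
  - by move=> s _; exact: D_derive.
  - by move=> s /sub_0T; exact: dD_le.
  - by apply: IH => //; apply: sub_0T; rewrite in_itv /= lexx ltW.
pose k := (Num.truncn (T * (2 * (L + 1)))).+1.
have Tk : T <= k%:R * del.
  rewrite ler_pdivlMr; first exact: ltW (truncnS_gt _).
  lra.
by apply/eqP; rewrite -subr_eq0; apply/eqP/(D0 k); rewrite // in_itv /= T0 lexx.
Qed.

End ODEUniqueness.

Section Flow.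
Variables (R : realType) (d : nat) (b : 'rV[R]_d -> 'rV[R]_d).
Variable X : R -> 'rV[R]_d -> 'rV[R]_d.
Hypotheses (b_C1 : C1 b) (X_flow : is_flow b X).

Lemma flowD (s t : R) x : 0 <= t -> X t (X s x) = X (t + s) x.
Proof.
have [X0 X_derive] := X_flow.
move=> t0; apply: esym.
apply: (@ode_solution_unique _ _ _ (C1_lipschitz_on_balls b_C1)
  (fun u => X (u + s) x) (fun u => X u (X s x))) => //.
- by move=> u; apply: is_derive_shift_comp; exact: X_derive.
- by rewrite add0r X0.
Qed.

Lemma flow1_jacobian (F : 'rV[R]_d -> 'rV[R]_d) :
  (forall x, differentiable F x) -> (forall x, F x = X 1 x) ->
  forall x, b x *m jacobian F x = b (F x).
Proof.
move=> F_diff FX x; have [X0 X_derive] := X_flow.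
have FXx_derive := is_derive_comp_jacobian (X_derive 0 x) (F_diff (X 0 x)).
have FX_shift : F \o X^~ x = fun s => X (s + 1) x.
  by apply/funext => s /=; rewrite FX flowD // addrC.
have shift_derive := is_derive_shift_comp (X_derive (0 + 1) x).
rewrite add0r in shift_derive; rewrite FX_shift X0 in FXx_derive.
by case: FXx_derive => _ <-; case: shift_derive => _ ->; rewrite FX.
Qed.

End Flow.

Unset Implicit Arguments.

Theorem proposition2p1 (R : realType) (d : nat) (hd : (1 <= d)%N)
  (F : 'rV[R]_d -> 'rV[R]_d)
  (hF : C1 F)
  (hFper : forall (k : 'rV[int]_d) (x : 'rV[R]_d), F (x + zvec R k) = F x + zvec R k)
  (b : 'rV[R]_d -> 'rV[R]_d) (hb : C1 b) (hbper : Zd_periodic b)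
  (X : R -> 'rV[R]_d -> 'rV[R]_d) (hX : is_flow b X)
  (hFX : forall x, F x = X 1 x) :
  (forall x : 'rV[R]_d, b x *m jacobian F x = b (F x)) /\
  (forall a : 'rV[R]_d,
     (exists k : 'rV[int]_d, F a - a = zvec R k) ->
     \det (jacobian F a - 1%:M) != 0 ->
     b a = 0).
Proof.
have b_jacobian := flow1_jacobian hb hX hF.1 hFX.
split=> // a [k Fa] det_ne0; apply: fixed_row_eq0 det_ne0.
by rewrite b_jacobian -[F a](subrK a) Fa addrC hbper.
Qed.
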